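(* Let $\widetilde{\mathbf{A}}_2(p) \coloneqq \widetilde{\mathbf{P}}_- \, \widetilde{\mathbf{J}} \, \widetilde{\mathbf{D}}_p \, \widetilde{\mathbf{P}}_-$. Then \begin{align*} \widetilde{\mathbf{A}}_2(p) = e^{i2p} \widetilde{\mathbf{P}}_a + e^{-i2p} \widetilde{\mathbf{P}}_b + \widetilde{\mathbf{P}}_c \widetilde{\mathbf{A}}_2(p) \widetilde{\mathbf{P}}_c + \widetilde{\mathbf{P}}_d \widetilde{\mathbf{A}}_2(p) \widetilde{\mathbf{P}}_d , \end{align*} where $\widetilde{\mathbf{P}}_i$ denotes the orthogonal projector on $\widetilde{\mathcal{H}}_i$.
   Context: Setting: two fermions on a one-dimensional lattice, each with four internal (spinor) labels $1,2,3,4$. Consider the Hilbert space spanned by $\ket{e_i}\ket{y}$, $i=1,\dots,6$, $y\in\mathbb{Z}$, where $\ket{e_1}=\ket{1}\ket{4}$, $\ket{e_2}=\ket{3}\ket{2}$, $\ket{e_3}=\ket{3}\ket{4}$, $\ket{e_4}=\ket{4}\ket{1}$, $\ket{e_5}=\ket{2}\ket{3}$, $\ket{e_6}=\ket{4}\ket{3}$ are pairs of internal labels, $y=x_1-x_2$ is the relative coordinate (allowed to run over all of $\mathbb{Z}$), and $p\in[-\pi,\pi]$ is the total momentum (Fourier conjugate of $z=x_1+x_2$). Let $\lambda\in\mathbb{C}$ with $\sqrt2|\lambda|\neq 2n\pi$ ($n\in\mathbb{Z}$), and $\mathbf{T}_y\ket{y}=\ket{y+1}$. Define $\mathbf{O}'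 \coloneqq \begin{pmatrix}0&0&-\bar\lambda\\0&0&-\bar\lambda\\-\lambda&-\lambda&0\end{pmatrix}$ (in the basis $e_1,e_2,e_3$, and identically in $e_4,e_5,e_6$), $\widetilde{\mathbf{J}} \coloneqq \exp\left(-i \begin{pmatrix}\mathbf{O}'&\mathbf{0}\\ \mathbf{0}&\mathbf{O}'\end{pmatrix}\otimes \ket{0}\bra{0}\right)$, $\widetilde{\mathbf{D}}_p \coloneqq \mathrm{diag}(e^{2ip}, e^{-2ip}, \mathbf{T}_y^{\dagger 2}, e^{2ip}, e^{-2ip}, \mathbf{T}_y^{2})$ in the basis $e_1,\dots,e_6$, $\widetilde{\mathbf{P}}_- \coloneqq \frac12\left(\mathbf{I}\otimes\mathbf{I} - \begin{pmatrix}\mathbf{0}&\mathbf{I}\\ \mathbf{I}&\mathbf{0}\end{pmatrix}\otimes \sum_y \ket{-y}\bra{y}\right)$ (antisymmetrization: $e_i\leftrightarrow e_{i+3}$, $y\mapsto -y$). $\widetilde{\mathbf{A}}_2(p)$ is the fixed-total-momentum block of the two-particle evolution (free massless 1D Dirac step followed by a local quartic interaction with coupling $\lambda$). Subspaces: $\widetilde{\mathcal{H}}_a = \mathrm{span}\{\ket{e_1}\ket{y}-\ket{e_4}\ket{-y},\ y\neq0\}$, $\widetilde{\mathcal{H}}_b=\mathrm{span}\{\ket{e_2}\ket{y}-\ket{e_5}\ket{-y},\ y\neq 0\}$, $\widetilde{\mathcal{H}}_c=\mathrm{span}\{\ket{e_3}\ket{2y+1}-\ket{e_6}\ket{-2y-1},\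 y\in\mathbb{Z}\}$, $\widetilde{\mathcal{H}}_d = (\widetilde{\mathcal{H}}_a\oplus\widetilde{\mathcal{H}}_b\oplus\widetilde{\mathcal{H}}_c)^\perp$ within $\mathrm{supp}\,\widetilde{\mathbf{P}}_-$, so that $\mathrm{supp}\,\widetilde{\mathbf{P}}_- = \widetilde{\mathcal{H}}_a\oplus\widetilde{\mathcal{H}}_b\oplus\widetilde{\mathcal{H}}_c\oplus\widetilde{\mathcal{H}}_d$. *)

From HB Require Import structures.
From mathcomp Require Import all_boot all_order all_algebra.
From mathcomp Require Import complex.
From mathcomp Require Import all_classical all_reals all_analysis.
Set Implicit Arguments. Unset Strict Implicit. Unset Printing Implicit Defensive.
Import Order.TTheory GRing.Theory Num.Theory.
Import numFieldNormedType.Exports.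
Local Open Scope ring_scope.

Section TwoParticle.
Variable R : realType.
Local Notation C := R[i].

Definition expi (t : R) : C := Complex (cos t) (sin t).

Definition mexp (n : nat) (A : 'M[C]_n) : 'M[C]_n :=
  limn (series (fun k => (k`!%:R : C)^-1 *: A ^+ k)).

Definition Oprime (lam : C) : 'M[C]_3 :=
  \matrix_(i < 3, j < 3)
    (if (val i < 2)%N && (val j == 2%N) then - lam^*
     else if (val i == 2%N) && (val j < 2)%N then - lam
     else 0).

Definition Jmat (lam : C) : 'M[C]_3 := mexp (- (Complex 0 1) *: Oprime lam).

(* State space: wave functions psi(e_{k+1}, y), k : 'I_6, y : int.
   Index k = 0..5 stands for e_1..e_6. *)
Definition Vec := 'I_6 -> int -> C.

Definition swap6 (k : 'I_6) : 'I_6 := inord ((val k + 3) %% 6).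
Definition blk (k : 'I_6) : 'I_3 := inord (val k %% 3).
Definition inblk (k : 'I_6) (j : 'I_3) : 'I_6 := inord (val j + (3 <= val k) * 3).

(* J~ = exp(-i (O' (+) O') (x) |0><0|) = (I - |0><0|) + exp(-i(O' (+) O')) (x) |0><0| *)
Definition Jt (lam : C) (psi : Vec) : Vec := fun k y =>
  if y == 0 then \sum_(j < 3) Jmat lam (blk k) j * psi (inblk k j) 0
  else psi k y.

(* D~_p = diag(e^{2ip}, e^{-2ip}, T_y^{dagger 2}, e^{2ip}, e^{-2ip}, T_y^2),
   with T_y |y> = |y+1>, so (T psi)(y) = psi(y-1). *)
Definition Dt (p : R) (psi : Vec) : Vec := fun k y =>
  match val k with
  | 0%N | 3%N => expi (2 * p) * psi k y
  | 1%N | 4%N => expi (- (2 * p)) * psi k y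
  | 2%N => psi k (y + 2)
  | _ => psi k (y - 2)
  end.

Definition Pm (psi : Vec) : Vec := fun k y =>
  (psi k y - psi (swap6 k) (- y)) / 2%:R.

(* Orthogonal projectors onto H_a, H_b, H_c: for an orthogonal family
   v_{k,y} = |e_k>|y> - |e_{k+3}>|-y> (norm^2 = 2), P psi = sum v <v,psi>/2. *)
Definition Ppair (S : 'I_6 -> int -> bool) (psi : Vec) : Vec := fun k y =>
  if S k y then (psi k y - psi (swap6 k) (- y)) / 2%:R else 0.

Definition Pa : Vec -> Vec :=
  Ppair (fun k y => ((val k == 0%N) || (val k == 3%N)) && (y != 0)).
Definition Pb : Vec -> Vec :=
  Ppair (fun k y => ((val k == 1%N) || (val k == 4%N)) && (y != 0)).
Definition Pc : Vec -> Vec :=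
  Ppair (fun k y => ((val k == 2%N) || (val k == 5%N)) && odd `|y|%N).
(* projector onto H_d = (H_a (+) H_b (+) H_c)^perp inside supp P_- *)
Definition Pd (psi : Vec) : Vec := fun k y =>
  Pm psi k y - Pa psi k y - Pb psi k y - Pc psi k y.

Definition A2 (lam : C) (p : R) (psi : Vec) : Vec :=
  Pm (Jt lam (Dt p (Pm psi))).

End TwoParticle.

From HB Require Import structures.
From mathcomp Require Import all_boot all_order all_algebra.
From mathcomp Require Import complex.
From mathcomp Require Import all_classical all_reals all_analysis.
From mathcomp Require Import ring.
Import Order.TTheory GRing.Theory Num.Theory.
Local Open Scope ring_scope.

(** The operator [P_- J D] leaves each of the four subspaces invariant.  On
    [H_a] and [H_b] the wave function vanishes at [y = 0], so [J] (which only
    acts at [y = 0]) is trivial there, while [D] is the phase [e^{+-2ip}].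
    Supports are tracked through each factor: [D] shifts the [e_3], [e_6]
    components by two sites, which preserves the parity of [y] and hence both
    [H_c] and [H_d]; [J] only mixes internal labels at [y = 0], which lies
    outside [H_c] and inside [H_d]; and [P_-] preserves supports invariant
    under [(e_i, y) |-> (e_{i+3}, -y)].  Writing [P_- = P_a + P_b + P_c + P_d]
    gives the block decomposition. *)

Lemma odd_abszD2 (y : int) : odd (absz (y + 2)) = odd (absz y).
Proof.
have oddE (z : int) : odd (absz z) = ~~ (2 %| z)%Z by rewrite dvdzE dvdn2 negbK.
by rewrite !oddE rpredDr // dvdzz.
Qed.

Lemma val_swap6 (k : 'I_6) : val (swap6 k) = ((val k + 3) %% 6)%N.
Proof. by rewrite /swap6 /= inordK // ltn_mod. Qed.

Lemma swap6K : involutive swap6.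
Proof.
by move=> k; apply/val_inj; rewrite !val_swap6; case: k => [[|[|[|[|[|[|k]]]]]] Hk].
Qed.

Section Supports.
Set Implicit Arguments.
Unset Strict Implicit.
Variable R : realType.
Implicit Types (phi psi : Vec R) (S T : 'I_6 -> int -> bool).

Definition antisym phi := forall k y, phi (swap6 k) (- y) = - phi k y.
Definition swap_invariant S := forall k y, S (swap6 k) (- y) = S k y.
Definition supp_in S phi := forall k y, ~~ S k y -> phi k y = 0.

Lemma vecDE phi psi k y : (phi + psi) k y = phi k y + psi k y.
Proof. by []. Qed.

Lemma vecZE (c : R[i]) phi k y : (c *: phi) k y = c * phi k y.
Proof. by []. Qed.

Lemma supp_in_sub S T phi :
  (forall k y, S k y -> T k y) -> supp_in S phi -> supp_in T phi.
Proof. by move=> sST hphi k y hT; apply: hphi; apply: contra hT; apply: sST. Qed.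

Lemma antisymZ (c : R[i]) phi : antisym phi -> antisym (c *: phi).
Proof. by move=> hphi k y; rewrite !vecZE hphi mulrN. Qed.

Lemma Ppair_antisym S psi : swap_invariant S -> antisym (Ppair S psi).
Proof.
move=> hS k y; rewrite /Ppair hS swap6K opprK.
by case: (S k y); [field | rewrite oppr0].
Qed.

Lemma Ppair_id S phi : antisym phi -> supp_in S phi -> Ppair S phi = phi.
Proof.
move=> hphi hS; apply/funext => k; apply/funext => y; rewrite /Ppair.
by case: ifP => [_|/negbT/hS ->//]; rewrite hphi; field.
Qed.

Lemma Ppair_supp_in S psi : supp_in S (Ppair S psi).
Proof. by move=> k y /negbTE hS; rewrite /Ppair hS. Qed.

Lemma Ppair_supp S T phi : swap_invariant T -> supp_in T phi ->
  supp_in (fun k y => S k y && T k y) (Ppair S phi).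
Proof.
move=> hT hphi k y; rewrite /Ppair; case: (S k y) => //= nT.
by rewrite hphi // (hphi (swap6 k)) ?hT // subr0 mul0r.
Qed.

Lemma swap_invariantN S :
  swap_invariant S -> swap_invariant (fun k y => ~~ S k y).
Proof. by move=> hS k y; rewrite hS. Qed.

Lemma Ppair_eq0 S phi k y : swap_invariant S ->
  supp_in (fun k y => ~~ S k y) phi -> Ppair S phi k y = 0.
Proof.
by move=> hS hphi; rewrite (Ppair_supp (swap_invariantN hS) hphi) // andbN.
Qed.

Lemma Pm_Ppair : @Pm R = Ppair (fun _ _ => true).
Proof. by []. Qed.

Lemma Pm_antisym psi : antisym (Pm psi).
Proof. by rewrite Pm_Ppair; apply: Ppair_antisym. Qed.

Lemma Pm_id phi : antisym phi -> Pm phi = phi.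
Proof. by rewrite Pm_Ppair => hphi; apply: Ppair_id. Qed.

Lemma Pm_supp T phi : swap_invariant T -> supp_in T phi -> supp_in T (Pm phi).
Proof. by move=> hT hphi; exact: (Ppair_supp (S := fun _ _ => true) hT hphi). Qed.

Lemma PmD phi psi : Pm (phi + psi) = Pm phi + Pm psi.
Proof. by apply/funext => k; apply/funext => y; rewrite /Pm !vecDE; field. Qed.

End Supports.

Definition Sa (k : 'I_6) (y : int) := ((val k == 0%N) || (val k == 3%N)) && (y != 0).
Definition Sb (k : 'I_6) (y : int) := ((val k == 1%N) || (val k == 4%N)) && (y != 0).
Definition Sc (k : 'I_6) (y : int) := ((val k == 2%N) || (val k == 5%N)) && odd `|y|%N.
Definition Sd (k : 'I_6) (y : int) := ~~ [|| Sa k y, Sb k y | Sc k y].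

Lemma Sa_swap : swap_invariant Sa.
Proof. by move=> k y; rewrite /Sa val_swap6 oppr_eq0; case: k => [[|[|[|[|[|[|k]]]]]] Hk]. Qed.

Lemma Sb_swap : swap_invariant Sb.
Proof. by move=> k y; rewrite /Sb val_swap6 oppr_eq0; case: k => [[|[|[|[|[|[|k]]]]]] Hk]. Qed.

Lemma Sc_swap : swap_invariant Sc.
Proof. by move=> k y; rewrite /Sc val_swap6 abszN; case: k => [[|[|[|[|[|[|k]]]]]] Hk]. Qed.

Lemma Sd_swap : swap_invariant Sd.
Proof. by move=> k y; rewrite /Sd Sa_swap Sb_swap Sc_swap. Qed.

Definition Dt_stable (S : 'I_6 -> int -> bool) :=
  forall k y, (val k == 2%N) || (val k == 5%N) -> S k (y + 2) = S k y.
Definition Jt_stable (S : 'I_6 -> int -> bool) :=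
  (forall k, S k 0) \/ (forall k, ~~ S k 0).

Lemma Sc_Dt_stable : Dt_stable Sc.
Proof. by move=> k y _; rewrite /Sc odd_abszD2. Qed.

Lemma Sd_Dt_stable : Dt_stable Sd.
Proof. by move=> k y /orP[] /eqP hk; rewrite /Sd /Sa /Sb /Sc hk odd_abszD2. Qed.

Lemma Sc_Jt_stable : Jt_stable Sc.
Proof. by right=> k; rewrite /Sc andbF. Qed.

Lemma Sd_Jt_stable : Jt_stable Sd.
Proof. by left=> k; rewrite /Sd /Sa /Sb /Sc eqxx !andbF. Qed.

Section Projectors.
Set Implicit Arguments.
Unset Strict Implicit.
Variable R : realType.
Implicit Types phi psi : Vec R.

Lemma Pa_antisym psi : antisym (Pa psi).
Proof. exact: Ppair_antisym Sa_swap. Qed.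

Lemma Pb_antisym psi : antisym (Pb psi).
Proof. exact: Ppair_antisym Sb_swap. Qed.

Lemma Pc_antisym psi : antisym (Pc psi).
Proof. exact: Ppair_antisym Sc_swap. Qed.

Lemma Pd_antisym psi : antisym (Pd psi).
Proof.
by move=> k y; rewrite /Pd Pm_antisym Pa_antisym Pb_antisym Pc_antisym; ring.
Qed.

Lemma Pd_supp psi : supp_in Sd (Pd psi).
Proof.
move=> k y; rewrite /Sd negbK /Pd /Pa /Pb /Pc /Ppair /Sa /Sb /Sc.
by case: k => [[|[|[|[|[|[|k]]]]]] hk] //=; rewrite ?orbF => h; rewrite ?h /Pm; ring.
Qed.

Lemma Pd_id phi : antisym phi -> supp_in Sd phi -> Pd phi = phi.
Proof.
move=> hanti hsupp.
have outside S : swap_invariant S -> (forall k y, Sd k y -> ~~ S k y) ->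
    forall k y, Ppair S phi k y = 0.
  by move=> hS hSd k y; apply: Ppair_eq0 hS (supp_in_sub hSd hsupp).
have Sd_out k y : Sd k y -> [&& ~~ Sa k y, ~~ Sb k y & ~~ Sc k y].
  by rewrite /Sd !negb_or.
apply/funext => k; apply/funext => y; rewrite /Pd.
have -> : Pa phi k y = 0 by apply: outside Sa_swap _ k y => ? ? /Sd_out/and3P[].
have -> : Pb phi k y = 0 by apply: outside Sb_swap _ k y => ? ? /Sd_out/and3P[].
have -> : Pc phi k y = 0 by apply: outside Sc_swap _ k y => ? ? /Sd_out/and3P[].
by rewrite Pm_id // !subr0.
Qed.

Lemma Pm_decomp psi : Pm psi = Pa psi + Pb psi + Pc psi + Pd psi.
Proof. by apply/funext => k; apply/funext => y; rewrite !vecDE /Pd; ring. Qed.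

End Projectors.

Section Evolution.
Set Implicit Arguments.
Unset Strict Implicit.
Variables (R : realType) (lam : R[i]) (p : R).
Implicit Types (phi psi : Vec R) (S : 'I_6 -> int -> bool).

Definition PJD phi := Pm (Jt lam (Dt p phi)).

Lemma DtD phi psi : Dt p (phi + psi) = Dt p phi + Dt p psi.
Proof.
apply/funext => k; apply/funext => y; rewrite vecDE /Dt.
by case: k => [[|[|[|[|[|[|k]]]]]] hk] //=; rewrite ?vecDE ?mulrDr.
Qed.

Lemma JtD phi psi : Jt lam (phi + psi) = Jt lam phi + Jt lam psi.
Proof.
apply/funext => k; apply/funext => y; rewrite vecDE /Jt; case: ifP => // _.
by rewrite -big_split; apply: eq_bigr => j _; rewrite vecDE mulrDr.
Qed.

Lemma PJD_add phi psi : PJD (phi + psi) = PJD phi + PJD psi.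
Proof. by rewrite /PJD DtD JtD PmD. Qed.

Lemma JtE_ne0 phi k y : y != 0 -> Jt lam phi k y = phi k y.
Proof. by rewrite /Jt => /negbTE ->. Qed.

Lemma Jt_id phi : supp_in (fun _ y => y != 0) phi -> Jt lam phi = phi.
Proof.
move=> hphi; apply/funext => k; apply/funext => y.
have [->|/JtE_ne0 //] := eqVneq y 0.
by rewrite /Jt eqxx hphi ?big1 // => j _; rewrite hphi ?mulr0.
Qed.

Lemma Jt_supp S phi : Jt_stable S -> supp_in S phi -> supp_in S (Jt lam phi).
Proof.
move=> hS0 hphi k y nS; have [y0|/JtE_ne0 ->] := eqVneq y 0; last exact: hphi.
move: nS; rewrite {}y0; case: hS0 => [-> //|hS0 _].
rewrite Jt_id ?hphi // => k' y'; rewrite negbK => /eqP ->; exact: hphi.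
Qed.

Lemma Dt_supp S phi : Dt_stable S -> supp_in S phi -> supp_in S (Dt p phi).
Proof.
move=> hS hphi k y nS; rewrite /Dt.
case: k hS nS => [[|[|[|[|[|[|k]]]]]] hk] //= hS nS; rewrite hphi ?mulr0 //.
- by rewrite hS.
- by rewrite -(hS _ (y - 2)) ?subrK.
Qed.

Lemma Dt_Pa psi : Dt p (Pa psi) = expi (2 * p) *: Pa psi.
Proof.
apply/funext => k; apply/funext => y; rewrite vecZE.
by case: k => [[|[|[|[|[|[|k]]]]]] hk] //; rewrite /Dt /Pa /Ppair /= ?mulr0.
Qed.

Lemma Dt_Pb psi : Dt p (Pb psi) = expi (- (2 * p)) *: Pb psi.
Proof.
apply/funext => k; apply/funext => y; rewrite vecZE.
by case: k => [[|[|[|[|[|[|k]]]]]] hk] //; rewrite /Dt /Pb /Ppair /= ?mulr0.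
Qed.

Lemma PJD_eigen (c : R[i]) phi : Dt p phi = c *: phi -> antisym phi ->
  supp_in (fun _ y => y != 0) phi -> PJD phi = c *: phi.
Proof.
move=> hD hanti hphi; rewrite /PJD hD Jt_id ?Pm_id //; first exact: antisymZ.
by move=> k y hy; rewrite vecZE hphi ?mulr0.
Qed.

Lemma PJD_Pa psi : PJD (Pa psi) = expi (2 * p) *: Pa psi.
Proof.
apply: PJD_eigen (Dt_Pa psi) (Pa_antisym psi) _.
by apply: (supp_in_sub _ (@Ppair_supp_in _ Sa psi)) => k y /andP[].
Qed.

Lemma PJD_Pb psi : PJD (Pb psi) = expi (- (2 * p)) *: Pb psi.
Proof.
apply: PJD_eigen (Dt_Pb psi) (Pb_antisym psi) _.
by apply: (supp_in_sub _ (@Ppair_supp_in _ Sb psi)) => k y /andP[].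
Qed.

Lemma PJD_supp S phi : swap_invariant S -> Dt_stable S -> Jt_stable S ->
  supp_in S phi -> supp_in S (PJD phi).
Proof.
by move=> hswap hshift hS0 hphi; apply/Pm_supp/Jt_supp/Dt_supp.
Qed.

Lemma Pc_PJD_Pc psi : Pc (PJD (Pc psi)) = PJD (Pc psi).
Proof.
apply: Ppair_id; first exact: Pm_antisym.
exact: PJD_supp Sc_swap Sc_Dt_stable Sc_Jt_stable (@Ppair_supp_in _ Sc psi).
Qed.

Lemma Pd_PJD_Pd psi : Pd (PJD (Pd psi)) = PJD (Pd psi).
Proof.
apply: Pd_id; first exact: Pm_antisym.
exact: PJD_supp Sd_swap Sd_Dt_stable Sd_Jt_stable (Pd_supp psi).
Qed.

End Evolution.

Theorem lemma1 (R : realType) (lam : R[i]) (p : R)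
  (hlam : forall n : int, Num.sqrt 2 * Normc.normc lam != 2 * n%:~R * pi)
  (hp : - pi <= p <= pi) :
  forall (psi : Vec R) (k : 'I_6) (y : int),
    A2 lam p psi k y =
      expi (2 * p) * Pa psi k y + expi (- (2 * p)) * Pb psi k y
      + Pc (A2 lam p (Pc psi)) k y + Pd (A2 lam p (Pd psi)) k y.
Proof.
move=> psi k y.
have A2E phi : A2 lam p phi = PJD lam p (Pm phi) by [].
rewrite !A2E (Pm_id (Pc_antisym psi)) (Pm_id (Pd_antisym psi)).
rewrite Pc_PJD_Pc Pd_PJD_Pd Pm_decomp !PJD_add PJD_Pa PJD_Pb.
by rewrite !vecDE !vecZE.
Qed.
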